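(* Let $M=(Q,\underline q,\Sigma_I,\Sigma_O,h)$ be a deterministic, completely specified prime FSM, $R=R(q_1,x_1,Z_1)\wedge\dots\wedge R(q_k,x_k,Z_k)$ a composite requirement on $M$ (pairs $(q_i,x_i)$ pairwise distinct, $\omega_M(q_i,x_i)\in Z_i\subsetneq\Sigma_O$), and $M_1'$ the nondeterministic requirement abstraction. Let $\mathcal D$ be a set of completely specified DFSMs over $\Sigma_I,\Sigma_O$, and let $TS\subseteq\Sigma_I^*$ be a complete reduction test suite, i.e. for all $S\in\mathcal D$: $L(S)\subseteq L(M_1')$ iff $S\ \mathrm{pass}_\Leftrightarrow\ TS$. Define $\overline\Pi=\bigcup_{i=1}^k\Pi(q_i).\{x_i\}$. Then every test suite $TS_\Leftrightarrow\subseteq\Sigma_I^*$ with $\mathrm{pref}(TS)\cap\overline\Pi\subseteq TS_\Leftrightarrow$ satisfies, for all $S\in\mathcal D$, $$S\ \mathrm{pass}_\Leftrightarrow\ TS_\Leftrightarrow \iff S\models R.$$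
   Context: FSM $(Q,\underline q,\Sigma_I,\Sigma_O,h)$ with $h\subseteq Q\times\Sigma_I\times\Sigma_O\times Q$; the language $L(q)$ of a state is the set of I/O-traces $(x_1,y_1)\dots(x_k,y_k)$ (including the empty trace) realisable by a transition path from $q$; $L(M)=L(\underline q)$. A completely specified DFSM has transition function $\delta$ and output function $\omega$, extended to input sequences in the usual way; $q\text{-after-}\bar x=\delta(q,\bar x)$. Prime machine: DFSM with minimal number of states among language-equivalent DFSMs. $\mathrm{pref}(X)$ denotes the set of all prefixes of traces in $X$; $X.Y=\{x.y\mid x\in X,y\in Y\}$. $\Pi(q)=\{\bar x\in\Sigma_I^*\mid\underline q\text{-after-}\bar x=q\}$ (in $M$). $S\models R(q,x,Z)$ iff $\omega_S(\underline s\text{-after-}\pi,x)\in Z$ for all $\pi\in\Pi(q)$, where $\underline s$ is the initial state of $S$; $S\models R$ iff each conjunct holds. Requirement abstraction $M_1$: same states, initial state and transition function $\delta_M$ as $M$, output $\omega_{M_1}(q_i,x_i)=Z_i$ and $\omega_{M_1}(q,x)=\Sigma_O$ otherwise. Nondeterministic abstraction $M_1'=(Q,\underline q,\Sigma_I,\Sigma_O,h_1')$ with $(q,x,y,q')\in h_1'$ iff $q'=\delta_M(q,x)$ and $y\in\omega_{M_1}(q,x)$; its set-valued output function $\omega_{M_1'}(q,\bar x)$ is the set of output traces $\bar y$ with $\bar x/\bar y\in L(q)$ in $M_1'$. Pass criterion: for a DFSM $S$ and $\bar x\in\Sigma_I^*$, $S\ \mathrm{pass}_\Leftrightarrow\ \bar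 x$ iff $\omega_S(\underline s,\bar x)\in\omega_{M_1'}(\underline q,\bar x)$; for a set $T$, $S\ \mathrm{pass}_\Leftrightarrow\ T$ iff $S\ \mathrm{pass}_\Leftrightarrow\ \bar x$ for all $\bar x\in T$. *)

From mathcomp Require Import all_boot.
Set Implicit Arguments. Unset Strict Implicit. Unset Printing Implicit Defensive.

Record dfsm (Q I O : finType) := DFSM {
  init : Q;
  delta : Q -> I -> Q;
  omega : Q -> I -> O }.

Section FSM.
Variables (I O : finType).

(* Language of a state of a general (possibly nondeterministic) FSM given by
   its transition relation h ⊆ Q × Σ_I × Σ_O × Q: I/O traces realisable by a
   transition path (the empty trace included). *)
Fixpoint lang (Q : Type) (h : Q -> I -> O -> Q -> Prop) (q : Q)
    (t : seq (I * O)) : Prop :=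
  match t with
  | [::] => True
  | (x, y) :: t' => exists q', h q x y q' /\ lang h q' t'
  end.

Variable Q : finType.

Definition dfsm_rel (M : dfsm Q I O) (q : Q) (x : I) (y : O) (q' : Q) : Prop :=
  y = omega M q x /\ q' = delta M q x.

Definition L (M : dfsm Q I O) : seq (I * O) -> Prop := lang (@dfsm_rel M) (init M).

Definition after (M : dfsm Q I O) (q : Q) (xs : seq I) : Q := foldl (delta M) q xs.

Fixpoint outs (M : dfsm Q I O) (q : Q) (xs : seq I) : seq O :=
  match xs with
  | [::] => [::]
  | x :: xs' => omega M q x :: outs M (delta M q x) xs'
  end.

Definition Pi (M : dfsm Q I O) (q : Q) (xs : seq I) : Prop := after M (init M) xs = q.

(* A requirement R(q,x,Z) conjunct; a composite requirement is a list of them. *)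
Definition req := (Q * I * {set O})%type.

Definition omegaM1 (R : seq req) (q : Q) (x : I) : {set O} :=
  match [seq r <- R | (r.1.1 == q) && (r.1.2 == x)] with
  | r :: _ => r.2
  | [::] => setT
  end.

Definition h1' (M : dfsm Q I O) (R : seq req) (q : Q) (x : I) (y : O) (q' : Q)
  : Prop := q' = delta M q x /\ y \in omegaM1 R q x.

Definition L_M1' (M : dfsm Q I O) (R : seq req) : seq (I * O) -> Prop :=
  lang (h1' M R) (init M).

Definition composite_req (M : dfsm Q I O) (R : seq req) : Prop :=
  uniq [seq r.1 | r <- R] /\
  (forall r, r \in R -> omega M r.1.1 r.1.2 \in r.2) /\
  (forall r, r \in R -> r.2 \proper [set: O]).

End FSM.

Definition prime_fsm (Q I O : finType) (M : dfsm Q I O) : Prop :=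
  forall (Q' : finType) (M' : dfsm Q' I O),
    (forall t, L M' t <-> L M t) -> #|Q| <= #|Q'|.

Definition sut (I O : finType) := { QS : finType & dfsm QS I O }.

Definition sut_L (I O : finType) (S : sut I O) := L (projT2 S).
Definition sut_outs (I O : finType) (S : sut I O) (xs : seq I) : seq O :=
  outs (projT2 S) (init (projT2 S)) xs.

(* S pass_⇔ xs  iff  ω_S(s, xs) ∈ ω_{M_1'}(q, xs), i.e. xs/ω_S(s,xs) ∈ L(M_1') *)
Definition pass1 (I O Q : finType) (M : dfsm Q I O) (R : seq (req I O Q))
  (S : sut I O) (xs : seq I) : Prop :=
  L_M1' M R (zip xs (sut_outs S xs)).

Definition pass (I O Q : finType) (M : dfsm Q I O) (R : seq (req I O Q))
  (S : sut I O) (T : seq I -> Prop) : Prop :=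
  forall xs, T xs -> pass1 M R S xs.

Definition satisfies (I O Q : finType) (M : dfsm Q I O) (R : seq (req I O Q))
  (S : sut I O) : Prop :=
  forall r, r \in R -> forall pi, Pi M r.1.1 pi ->
    omega (projT2 S) (after (projT2 S) (init (projT2 S)) pi) r.1.2 \in r.2.

Definition PiBar (I O Q : finType) (M : dfsm Q I O) (R : seq (req I O Q))
  (xs : seq I) : Prop :=
  exists r, r \in R /\ exists pi, Pi M r.1.1 pi /\ xs = rcons pi r.1.2.

Definition pref (I : finType) (T : seq I -> Prop) (u : seq I) : Prop :=
  exists t, T t /\ prefix u t.

From mathcomp Require Import all_boot.
Set Implicit Arguments. Unset Strict Implicit.

(* A trace xs/ω_S(xs) is accepted by the requirement abstraction
   M_1' exactly when each step of it is: for every prefix pi.x of xs, the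
   output of S after pi on x lies in ω_{M_1}(q-after-pi, x)  [lang_h1'_outsP].
   Since ω_{M_1} is Σ_O except at the requirement cells (q_i, x_i), where it is
   Z_i [omegaM1_cases, omegaM1_req], a test xs is passed as soon as S respects
   R at the prefixes of xs lying in Π̄ [pass1_of_req_steps]; conversely a
   passed test certifies every requirement cell it visits [pass1_req_step].
   The theorem follows:
   - if S ⊨ R, every test is passed;
   - if S passes TS_⇔, it passes TS, since the only constraining prefixes of
     the tests in TS lie in pref(TS) ∩ Π̄ ⊆ TS_⇔; by completeness of TS, S is
     then a reduction of M_1', so it passes every test pi.x_i with pi ∈ Π(q_i),
     which is S ⊨ R. *)

Lemma outs_in_lang (QS I O : finType) (MS : dfsm QS I O) (xs : seq I) (s : QS) :
  lang (@dfsm_rel I O QS MS) s (zip xs (outs MS s xs)).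
Proof. by elim: xs s => [|x xs IH] s //=; exists (delta MS s x). Qed.

Section RequirementAbstraction.
Variables (Q I O : finType) (M : dfsm Q I O) (R : seq (req I O Q)).

Lemma omegaM1_cases (q : Q) (x : I) :
  omegaM1 R q x = setT \/
  exists2 r, r \in R & [/\ r.1.1 = q, r.1.2 = x & omegaM1 R q x = r.2].
Proof.
rewrite /omegaM1; case Ef: [seq r <- R | _] => [|r rs]; [by left | right].
have : r \in [seq r <- R | (r.1.1 == q) && (r.1.2 == x)] by rewrite Ef mem_head.
by rewrite mem_filter => /andP [/andP [/eqP qr /eqP xr] Rr]; exists r.
Qed.

Lemma omegaM1_req (r : req I O Q) :
  uniq [seq r.1 | r <- R] -> r \in R -> omegaM1 R r.1.1 r.1.2 = r.2.
Proof.
elim: R => [|r0 R' IH] //= /andP [r0_fresh uniqR'].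
rewrite inE /omegaM1 /= => /orP [/eqP -> | Rr]; first by rewrite !eqxx.
case: ifP => [/andP [/eqP E1 /eqP E2] | _]; last exact: IH.
have same_cell : r0.1 = r.1 by rewrite [r0.1]surjective_pairing [r.1]surjective_pairing E1 E2.
by move/negP: r0_fresh; case; apply/mapP; exists r.
Qed.

Lemma lang_h1'_outsP (QS : finType) (MS : dfsm QS I O) (xs : seq I) (q : Q) (s : QS) :
  lang (h1' M R) q (zip xs (outs MS s xs)) <->
  (forall pi x, prefix (rcons pi x) xs ->
     omega MS (after MS s pi) x \in omegaM1 R (after M q pi) x).
Proof.
elim: xs q s => [|x xs IH] q s /=; first by split=> // _ [].
split.
- move=> [_ [[-> out_ok] /IH tail_ok]] [|y pi] x0 /=.
    by rewrite prefix0s andbT => /eqP ->.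
  by move=> /andP [/eqP -> pre]; apply: tail_ok.
- move=> steps_ok; exists (delta M q x); split.
    by split=> //; apply: (steps_ok [::]); rewrite /= eqxx prefix0s.
  by apply/IH => pi x0 pre; apply: (steps_ok (x :: pi)); rewrite /= eqxx.
Qed.

Lemma pass1_of_req_steps (S : sut I O) (xs : seq I) :
  (forall r pi, r \in R -> Pi M r.1.1 pi -> prefix (rcons pi r.1.2) xs ->
     omega (projT2 S) (after (projT2 S) (init (projT2 S)) pi) r.1.2 \in r.2) ->
  pass1 M R S xs.
Proof.
move=> req_ok; apply/lang_h1'_outsP => pi x pre.
case: (omegaM1_cases (after M (init M) pi) x) => [-> | [r Rr [qr xr ->]]].
  by rewrite inE.
by rewrite -xr; apply: req_ok; rewrite ?qr ?xr.
Qed.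

Lemma pass1_req_step (S : sut I O) (xs : seq I) (r : req I O Q) (pi : seq I) :
  uniq [seq r.1 | r <- R] -> r \in R -> Pi M r.1.1 pi ->
  prefix (rcons pi r.1.2) xs -> pass1 M R S xs ->
  omega (projT2 S) (after (projT2 S) (init (projT2 S)) pi) r.1.2 \in r.2.
Proof.
move=> uniqR Rr Pi_pi pre /lang_h1'_outsP /(_ pi _ pre).
by rewrite Pi_pi omegaM1_req.
Qed.

Lemma pass1_of_reduction (S : sut I O) (xs : seq I) :
  (forall t, sut_L S t -> L_M1' M R t) -> pass1 M R S xs.
Proof. by move=> red; apply: red; apply: outs_in_lang. Qed.

End RequirementAbstraction.

Theorem theorem4 (Q I O : finType) (M : dfsm Q I O) (R : seq (req I O Q))
  (D : sut I O -> Prop) (TS TSeq : seq I -> Prop) :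
  prime_fsm M ->
  composite_req M R ->
  (forall S, D S -> ((forall t, sut_L S t -> L_M1' M R t) <-> pass M R S TS)) ->
  (forall u, pref TS u -> PiBar M R u -> TSeq u) ->
  forall S, D S -> (pass M R S TSeq <-> satisfies M R S).
Proof.
move=> _ [uniqR _] complete TSeq_covers S DS; split.
- move=> passEq.
  have passTS : pass M R S TS.
    move=> t TSt; apply: pass1_of_req_steps => r pi Rr Pi_pi pre.
    apply: (pass1_req_step uniqR Rr Pi_pi (prefix_refl _)); apply: passEq.
    apply: TSeq_covers; first by exists t.
    by exists r; split=> //; exists pi.
  move=> r Rr pi Pi_pi.
  apply: (pass1_req_step uniqR Rr Pi_pi (prefix_refl _)).
  exact/pass1_of_reduction/(complete S DS).
- move=> sat xs _; apply: pass1_of_req_steps => r pi Rr Pi_pi _.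
  exact: sat.
Qed.
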